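(* Let $\mathfrak B,\mathfrak D^+,\mathfrak D^-$ be Banach spaces and let $I^+\colon\mathfrak D^+\to\mathfrak B$, $I^-\colon\mathfrak B\to\mathfrak D^-$ be injective continuous linear embeddings with dense ranges. Let $T\colon\mathfrak D^+\to\mathfrak D^-$ be a bounded linear operator, and let $T^\bullet=(I^-)^{-1}T(I^+)^{-1}$ be the (generally unbounded) operator in $\mathfrak B$ with domain $\operatorname{dom}T^\bullet=\{x\in I^+(\mathfrak D^+)\;:\;T(I^+)^{-1}x\in I^-(\mathfrak B)\}$, acting by $T^\bullet x=(I^-)^{-1}T(I^+)^{-1}x$. Suppose that for some bounded operator $A\in\mathcal B(\mathfrak B)$ the operator $T-I^-AI^+\colon\mathfrak D^+\to\mathfrak D^-$ has a bounded inverse. Then $T^\bullet$ is closed and densely defined.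
   Context: ''Has a bounded inverse'' means: the operator is a bijection of $\mathfrak D^+$ onto $\mathfrak D^-$ with bounded inverse. *)

From HB Require Import structures.
From mathcomp Require Import all_boot all_order all_algebra.
From mathcomp Require Import all_classical all_reals all_analysis.
Set Implicit Arguments. Unset Strict Implicit. Unset Printing Implicit Defensive.
Import Order.TTheory GRing.Theory Num.Theory.
Import numFieldNormedType.Exports.
Local Open Scope classical_set_scope.
Local Open Scope ring_scope.

Definition dom_bullet (Dp B Dm : Type) (Ip : Dp -> B) (Im : B -> Dm)
  (T : Dp -> Dm) : set B :=
  [set x | exists d, Ip d = x /\ exists b, Im b = T d].

(* Graph of T^bullet: pairs (x, y) with x = I^+ d and I^- y = T d.
   (I^+, I^- injective, so this is the graph of a function on dom_bullet.) *)
Definition graph_bullet (Dp B Dm : Type) (Ip : Dp -> B) (Im : B -> Dm)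
  (T : Dp -> Dm) : set (B * B) :=
  [set p | exists d, Ip d = p.1 /\ Im p.2 = T d].

Definition has_bounded_inverse (K : numFieldType) (X Y : normedModType K)
  (f : X -> Y) : Prop :=
  exists g : {linear Y -> X}, cancel f g /\ cancel g f /\ continuous g.

Definition closed_operator (K : numFieldType) (B : normedModType K)
  (G : set (B * B)) : Prop := closed G.

Definition densely_defined (K : numFieldType) (B : normedModType K)
  (D : set B) : Prop := dense D.

From HB Require Import structures.
From mathcomp Require Import all_boot all_order all_algebra.
From mathcomp Require Import all_classical all_reals all_analysis.
Set Implicit Arguments. Unset Strict Implicit. Unset Printing Implicit Defensive.
Import Order.TTheory GRing.Theory Num.Theory.
Import numFieldNormedType.Exports.
Local Open Scope classical_set_scope.
Local Open Scope ring_scope.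

(* Let R be the bounded inverse of S := T - I^- A I^+.  For x, y in B,
   I^- y = T d with x = I^+ d  iff  I^- (y - A x) = S d  iff  x = I^+ R I^- (y - A x),
   so the graph of T^bullet is the fixed-point set of a continuous map of B x B,
   hence closed.  Conversely every I^+ R I^- b lies in dom T^bullet, and
   I^+ R I^- has dense range as a composite of continuous maps with dense
   ranges. *)

Lemma subset_dense (T : topologicalType) (D E : set T) :
  D `<=` E -> dense D -> dense E.
Proof.
move=> DE Dd O O0 Oo; have [x [Ox Dx]] := Dd O O0 Oo.
by exists x; split => //; exact: DE.
Qed.

Lemma dense_image (S T : topologicalType) (f : S -> T) (D : set S) :
  continuous f -> dense (range f) -> dense D -> dense (f @` D).
Proof.
move=> fc fd Dd O O0 Oo; have [y [Oy [s _ fs]]] := fd O O0 Oo.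
have [d [Ofd Dd']] : f @^-1` O `&` D !=set0.
  by apply: Dd; [exists s; rewrite /preimage /= fs | exact: open_comp].
by exists (f d); split => //; exists d.
Qed.

Lemma dense_range_comp (S T U : topologicalType) (f : T -> U) (g : S -> T) :
  continuous f -> dense (range f) -> dense (range g) -> dense (range (f \o g)).
Proof. by move=> fc fd gd; rewrite -(image_comp g f); exact: dense_image. Qed.

Lemma closed_eq_fun (K : numFieldType) (T : topologicalType) (V : normedModType K)
    (f g : T -> V) :
  continuous f -> continuous g -> closed [set x | f x = g x].
Proof.
move=> fc gc; have -> : [set x | f x = g x] = (f \- g) @^-1` [set 0].
  by apply/seteqP; split => x /= => [->|/eqP]; rewrite ?subrr // subr_eq0 => /eqP.
apply: preimage_closed => [x _|]; first exact: cvgB (fc x) (gc x).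
exact/accessible_closed_set1/hausdorff_accessible/norm_hausdorff.
Qed.

Section BulletOperator.
Variables (K : numFieldType) (B Dp Dm : normedModType K).
Variables (Ip : {linear Dp -> B}) (Im : {linear B -> Dm}).
Variables (T : {linear Dp -> Dm}) (A : {linear B -> B}) (R : Dm -> Dp).
Hypothesis RK : cancel (fun d => T d - Im (A (Ip d))) R.
Hypothesis KR : cancel R (fun d => T d - Im (A (Ip d))).

Lemma T_R_Im (b : B) : T (R (Im b)) = Im (b + A (Ip (R (Im b)))).
Proof. by have /eqP := KR (Im b); rewrite subr_eq linearD => /eqP. Qed.

Lemma graph_bulletE :
  graph_bullet Ip Im T = [set p | p.1 = Ip (R (Im (p.2 - A p.1)))].
Proof.
apply/seteqP; split => -[x y] /=.
  by move=> [d [/= <- Ty]]; rewrite linearB Ty RK.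
move=> x_fix; exists (R (Im (y - A x))); split=> //.
by rewrite T_R_Im -x_fix subrK.
Qed.

Lemma range_sub_dom_bullet : range (Ip \o R \o Im) `<=` dom_bullet Ip Im T.
Proof.
move=> _ [b _ <-]; exists (R (Im b)); split => //.
by exists (b + A (Ip (R (Im b)))); rewrite T_R_Im.
Qed.

Lemma closed_graph_bullet :
  continuous Ip -> continuous Im -> continuous A -> continuous R ->
  closed (graph_bullet Ip Im T).
Proof.
move=> Ipc Imc Ac Rc; rewrite graph_bulletE.
apply: closed_eq_fun => [p|p]; first exact: cvg_fst.
apply: continuous_comp (Ipc _); apply: continuous_comp (Rc _).
apply: continuous_comp (Imc _); apply: cvgB; first exact: cvg_snd.
by apply: continuous_comp (Ac _); exact: cvg_fst.
Qed.

Lemma dense_dom_bullet :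
  continuous Ip -> dense (range Ip) -> continuous R -> dense (range Im) ->
  dense (dom_bullet Ip Im T).
Proof.
move=> Ipc Ipd Rc Imd; apply: subset_dense range_sub_dom_bullet _.
have dense_range_R : dense (range R).
  have -> : range R = setT.
    by apply/seteqP; split => // d _; exists (T d - Im (A (Ip d))).
  by move=> O O0 _; rewrite setIT.
have IpR_continuous : continuous (Ip \o R).
  by move=> x; apply: continuous_comp (Rc _) (Ipc _).
apply: dense_range_comp IpR_continuous _ Imd.
exact: dense_range_comp Ipc Ipd dense_range_R.
Qed.

End BulletOperator.

Theorem mainTheorem1 (K : numFieldType)
  (B Dp Dm : completeNormedModType K)
  (Ip : {linear Dp -> B}) (Im : {linear B -> Dm})
  (T : {linear Dp -> Dm}) (A : {linear B -> B}) :
  injective Ip -> continuous Ip -> dense (range Ip) ->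
  injective Im -> continuous Im -> dense (range Im) ->
  continuous T -> continuous A ->
  has_bounded_inverse (fun d : Dp => T d - Im (A (Ip d))) ->
  closed_operator (graph_bullet Ip Im T) /\
  densely_defined (dom_bullet Ip Im T).
Proof.
move=> _ Ipc Ipd _ Imc Imd _ Ac [R [RK [KR Rc]]]; split.
- apply: (closed_graph_bullet RK KR Ipc Imc Ac Rc).
- apply: (dense_dom_bullet RK KR Ipc Ipd Rc Imd).
Qed.
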